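(* Let $v$ be the last installed view in the system. Then view $v$ will eventually be changed (i.e., $v.succ$ will eventually be installed).
   Context: System: servers $S=\{s_1,\dots,s_n\}$; reliable links, message passing; asynchronous; crash failures only (a server is correct if it does not crash); at most $f$ servers crash and $2f+1\le n$. Views form a sequence $v_0,v_1,\dots$ with $v_{k+1}=v_k.succ$; $v<w$ means $w$ is obtained from $v$ by applying $succ$ one or more times. Each server $s$ has a current view $s.cview$ (initially $v_0$), a local timeout per view, and a weight in each view; in every view each server's weight is strictly between $\mathbb{wl}=n/(2(n-f))$ and $\mathbb{wu}=n/(2f)$ and the total weight is at most $n$. A weighted majority for view $v$ is a set of servers whose weights in $v$ sum to more than $n/2$. View changer run by each server $s$ with $s.cview=v$: when its local timeout for $v$ expires it sends $\langle\text{change\_view},v.succ\rangle$ to all servers; once it has received or sent change\_view for $v.succ$ it forwards it if not already sent, disables read/write operations, sends $\langle\text{state\_update},(val,ts,cid),v,w\rangle$ to all servers — at this point it has uninstalled $v$ — waits until it has state\_update messages for view $v$ whose weights sum to more than $n/2$, adopts the value with lexicographically largest $(ts,cid)$, then sets $s.cview\leftarrow v.succ$ (installs $v.succ$), sets a new timeout and re-enables read/write operations. A view $v$ is installed in the system once at least one server installs $v$ and every server $s$ satisfies $s.cview\le v$. *)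

From mathcomp Require Import all_boot all_order all_algebra.
Set Implicit Arguments. Unset Strict Implicit. Unset Printing Implicit Defensive.
Import Order.TTheory GRing.Theory Num.Theory.

(* Views v_0, v_1, ... are represented by their index k : nat; v.succ = v.+1
   and v < w is the order on nat. *)

(* Register contents (val, ts, cid) : ((val, ts), cid). *)
Definition data := (nat * nat * nat)%type.
Definition dts (d : data) : nat := d.1.2.
Definition dcid (d : data) : nat := d.2.
Definition lex_le (d1 d2 : data) : bool :=
  (dts d1 < dts d2) || ((dts d1 == dts d2) && (dcid d1 <= dcid d2)).

(* Message bodies: inl w = <change_view, w>;
   inr (d, v, w) = <state_update, d, v, w>. *)
Definition body := (nat + (data * nat * nat))%type.
Definition CV (w : nat) : body := inl w.
Definition SU (d : data) (v w : nat) : body := inr (d, v, w).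

Section Model.
Variable n : nat.
Definition server := 'I_n.

(* a message in transit: (source, destination, body) *)
Definition msg := (server * server * body)%type.

Record lstate := LState {
  cview   : nat;
  ldata   : data;
  ops_on  : bool;                (* read/write operations enabled *)
  cv_sent : bool;                (* sent change_view for cview.succ *)
  su_sent : bool;                (* sent state_update for cview (uninstalled) *)
  alive   : bool;
  inbox   : seq (server * body)  (* received messages (sender, body) *)
}.

Record config := Config {
  ls   : server -> lstate;
  sent : seq msg                 (* every message ever sent *)
}.

Definition init_config (d0 : data) : config :=
  Config (fun _ => LState 0 d0 true false false true [::]) [::].

Definition upd (f : server -> lstate) (s : server) (x : lstate) :=
  fun p => if p == s then x else f p.

Definition broadcast (s : server) (b : body) : seq msg :=
  [seq (s, p, b) | p <- enum 'I_n].

Definition su_senders (x : lstate) (v : nat) : {set server} :=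
  [set p | has (fun m => (m.1 == p) &&
      (if m.2 is inr (_, v', _) then v' == v else false)) (inbox x)].

Variable weight : nat -> server -> rat.

Definition wsum (v : nat) (A : {set server}) : rat := \sum_(s in A) weight v s.

Definition weighted_majority (v : nat) (A : {set server}) : Prop :=
  (n%:R / 2 < wsum v A)%R.

Definition en_timeout (x : lstate) : Prop :=
  alive x /\ ~~ cv_sent x.
Definition en_uninstall (x : lstate) : Prop :=
  [/\ alive x, ~~ su_sent x &
      (cv_sent x \/ exists p, (p, CV (cview x).+1) \in inbox x)].
Definition en_install (x : lstate) : Prop :=
  [/\ alive x, su_sent x & weighted_majority (cview x) (su_senders x (cview x))].

Definition adoptable (x : lstate) (v : nat) (d : data) : Prop :=
  (exists p w, (p, SU d v w) \in inbox x) /\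
  (forall p d' w, (p, SU d' v w) \in inbox x -> lex_le d' d).

Inductive step (c c' : config) : Prop :=
| StStutter : c' = c -> step c c'
| StDeliver (src dst : server) (b : body) :
    (src, dst, b) \in sent c ->
    let x := ls c dst in
    c' = Config (upd (ls c) dst
                   (LState (cview x) (ldata x) (ops_on x) (cv_sent x)
                           (su_sent x) (alive x) ((src, b) :: inbox x)))
                (sent c) -> step c c'
| StTimeout (s : server) :
    let x := ls c s in
    en_timeout x ->
    c' = Config (upd (ls c) s
                   (LState (cview x) (ldata x) (ops_on x) true
                           (su_sent x) (alive x) (inbox x)))
                (broadcast s (CV (cview x).+1) ++ sent c) -> step c c'
| StUninstall (s : server) :
    let x := ls c s in
    en_uninstall x ->
    c' = Config (upd (ls c) s
                   (LState (cview x) (ldata x) false true true (alive x) (inbox x)))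
                (broadcast s (SU (ldata x) (cview x) (cview x).+1)
                 ++ (if cv_sent x then [::] else broadcast s (CV (cview x).+1))
                 ++ sent c) -> step c c'
| StInstall (s : server) (d : data) :
    let x := ls c s in
    en_install x -> adoptable x (cview x) d ->
    c' = Config (upd (ls c) s
                   (LState (cview x).+1 d true false false (alive x) (inbox x)))
                (sent c) -> step c c'
| StOp (s : server) (d : data) :
    let x := ls c s in
    alive x -> ops_on x ->
    c' = Config (upd (ls c) s
                   (LState (cview x) d (ops_on x) (cv_sent x) (su_sent x)
                           (alive x) (inbox x)))
                (sent c) -> step c c'
| StCrash (s : server) :
    let x := ls c s in
    alive x ->
    c' = Config (upd (ls c) s
                   (LState (cview x) (ldata x) (ops_on x) (cv_sent x)
                           (su_sent x) false (inbox x)))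
                (sent c) -> step c c'.

Definition execution (d0 : data) (c : nat -> config) : Prop :=
  c 0 = init_config d0 /\ forall t, step (c t) (c t.+1).

Definition correct (c : nat -> config) (s : server) : Prop :=
  forall t, alive (ls (c t) s).

Definition reliable_links (c : nat -> config) : Prop :=
  forall t src dst b, (src, dst, b) \in sent (c t) -> correct c dst ->
    exists t', (src, b) \in inbox (ls (c t') dst).

(* weak fairness of the view-changer actions of correct servers (local
   timeouts eventually expire, enabled actions are eventually taken):
   no such action stays enabled forever *)
Definition fair (c : nat -> config) : Prop :=
  forall s, correct c s -> forall t,
    [/\ exists t', t <= t' /\ ~ en_timeout (ls (c t') s),
        exists t', t <= t' /\ ~ en_uninstall (ls (c t') s) &
        exists t', t <= t' /\ ~ en_install (ls (c t') s)].

Definition at_most_f_crash (c : nat -> config) (f : nat) : Prop :=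
  exists F : {set server}, #|F| <= f /\ forall s, s \notin F -> correct c s.

Definition installed_sys (x : config) (v : nat) : Prop :=
  (exists s, cview (ls x s) = v) /\ (forall s, cview (ls x s) <= v).

End Model.

(* weight constraints: wl < weight < wu with wl = n/(2(n-f)), wu = n/(2f)
   (written multiplied out, so f = 0 means no upper bound), total <= n *)
Definition weights_ok (n f : nat) (weight : nat -> 'I_n -> rat) : Prop :=
  forall v, (forall s, (n%:R < 2 * (n - f)%:R * weight v s)%R /\
                       (2 * f%:R * weight v s < n%:R)%R)
            /\ (\sum_(s : 'I_n) weight v s <= n%:R)%R.

From mathcomp Require Import all_boot all_order all_algebra.
From mathcomp Require Import zify.
From Stdlib Require Import Classical.
Set Implicit Arguments. Unset Strict Implicit. Unset Printing Implicit Defensive.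
Import Order.TTheory GRing.Theory Num.Theory.

(* Suppose v.+1 is never installed after t. Views grow by at most one per
   step, so from t on every view stays at most v; being nondecreasing and
   bounded, all views eventually stop changing. From then on, let s be a
   correct server with the smallest view m. By fairness every correct server
   eventually times out and uninstalls its view, and a server whose view is at
   least m and that has uninstalled it has broadcast a state_update for m. By
   reliable links, s eventually holds such messages from all correct servers;
   they form a weighted majority since at most f servers crash and every weight
   exceeds n/(2(n-f)). So the install action of s stays enabled forever,
   contradicting fairness. *)

Definition eventually (P : nat -> Prop) : Prop :=
  exists N, forall a, N <= a -> P a.

Definition eventually_constant (g : nat -> nat) : Prop :=
  eventually (fun a => forall b, a <= b -> g b = g a).

Lemma eventually_and (P Q : nat -> Prop) :
  eventually P -> eventually Q -> eventually (fun a => P a /\ Q a).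
Proof.
move=> [M HP] [N HQ]; exists (maxn M N) => a.
by rewrite geq_max => /andP[/HP ? /HQ ?].
Qed.

Lemma eventually_forall (T : finType) (P : T -> nat -> Prop) :
  (forall i, eventually (P i)) -> eventually (fun a => forall i, P i a).
Proof.
move=> evP; suff [N HN] : eventually (fun a => forall i, i \in enum T -> P i a).
  by exists N => a /HN Pa i; apply: Pa; rewrite mem_enum.
elim: (enum T) => [|j s IH]; first by exists 0.
have [N HN] := eventually_and (evP j) IH.
by exists N => a /HN[Pj Ps] i; rewrite inE => /predU1P[->|/Ps].
Qed.

Lemma nondecreasing_bounded_eventually_constant (g : nat -> nat) (v : nat) :
  {homo g : a b / a <= b} -> (forall a, g a <= v) -> eventually_constant g.
Proof.
move=> g_mono g_bnd; apply: NNPP => not_const.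
have g_grows a : exists b, a <= b /\ g a < g b.
  apply: NNPP => no_b; apply: not_const; exists a => b ab c bc.
  apply/eqP; rewrite eqn_leq (g_mono b c bc) andbT leqNgt.
  apply/negP => gbc; apply: no_b.
  by exists c; split; [lia | exact: leq_ltn_trans (g_mono a b ab) gbc].
suff [a lt_va] : exists a, v < g a by have := g_bnd a; lia.
elim: v.+1 => [|k [a lt_ka]]; first by exists 0.
by have [b [_ lt_ab]] := g_grows a; exists b; lia.
Qed.

Section Steps.
Variables (n : nat) (weight : nat -> 'I_n -> rat).
Implicit Types (c : config n) (p : 'I_n).

Lemma step_cview c c' p :
  step weight c c' -> cview (ls c p) <= cview (ls c' p) <= (cview (ls c p)).+1.
Proof.
by case=> [->|???? x ->|? x _ ->|? x _ ->|?? x _ _ ->|?? x _ _ ->|? x _ ->];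
  rewrite /upd /=; try case: eqP => [->|_]; rewrite ?leqnn ?leqnSn.
Qed.

Lemma step_flags c c' p :
  step weight c c' -> cview (ls c' p) = cview (ls c p) ->
  (cv_sent (ls c p) -> cv_sent (ls c' p)) /\ (su_sent (ls c p) -> su_sent (ls c' p)).
Proof.
case=> [->|???? x ->|? x _ ->|? x _ ->|?? x _ _ ->|?? x _ _ ->|? x _ ->];
  rewrite /upd /=; try case: eqP => [->|_] //=; by [split | move/esym/n_Sn].
Qed.

Lemma step_inbox c c' p :
  step weight c c' -> {subset inbox (ls c p) <= inbox (ls c' p)}.
Proof.
case=> [->|???? x ->|? x _ ->|? x _ ->|?? x _ _ ->|?? x _ _ ->|? x _ ->] m;
  rewrite /upd /=; try case: eqP => [->|_] //=; by [|rewrite inE => ->; rewrite orbT].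
Qed.

Lemma step_sent c c' : step weight c c' -> {subset sent c <= sent c'}.
Proof.
case=> [->|???? x ->|? x _ ->|? x _ ->|?? x _ _ ->|?? x _ _ ->|? x _ ->] m //=;
  by rewrite !mem_cat => ->; rewrite !orbT.
Qed.

End Steps.

Section Invariant.
Variables (n : nat) (weight : nat -> 'I_n -> rat).

(* The views a server has uninstalled are exactly those below
   [cview + su_sent]; for each of them it has sent a state_update to everyone. *)
Definition state_updates_sent (x : config n) : Prop :=
  forall p q w, w < cview (ls x p) + su_sent (ls x p) ->
    exists d w', (p, q, SU d w w') \in sent x.

Lemma mem_broadcast (s q : 'I_n) b : (s, q, b) \in broadcast s b.
Proof. by apply: (map_f (fun p => (s, p, b))); rewrite mem_enum. Qed.

Lemma step_state_updates_sent c c' :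
  step weight c c' -> state_updates_sent c -> state_updates_sent c'.
Proof.
move=> st inv p q w; have sub := step_sent st.
have old r w' : w' < cview (ls c r) + su_sent (ls c r) ->
    exists d w'', (r, q, SU d w' w'') \in sent c'.
  by move=> /(inv r q) [d [w'' sent_su]]; exists d, w''; apply: sub.
case: st sub old => [->|???? x ->|? x _ ->|? x [_ nsu _] ->|?? x [_ su _] _ ->|?? x _ _ ->|? x _ ->] _ /= old;
  rewrite /upd /=; try case: eqP => [->|_] /=; try by move/old.
- rewrite addn1 ltnS leq_eqVlt => /predU1P[->|lt_w].
    by exists (ldata x), (cview x).+1; rewrite mem_cat mem_broadcast.
  by apply: old; rewrite (negbTE nsu) addn0.
- by rewrite addn0 => lt_w; apply: old; rewrite su addn1.
Qed.

End Invariant.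

Section Execution.
Variables (n : nat) (weight : nat -> 'I_n -> rat) (d0 : data) (c : nat -> config n).
Hypothesis exec : execution weight d0 c.

Lemma execution_state_updates_sent t : state_updates_sent (c t).
Proof.
have [c0 st] := exec; elim: t => [|t]; last exact: step_state_updates_sent.
by rewrite c0.
Qed.

Lemma cview_nondecreasing p : {homo (fun t => cview (ls (c t) p)) : a b / a <= b}.
Proof.
apply: homo_leq => [//||t]; first exact: leq_trans.
by have /andP[] := step_cview p (exec.2 t).
Qed.

Lemma inbox_nondecreasing p a b :
  a <= b -> {subset inbox (ls (c a) p) <= inbox (ls (c b) p)}.
Proof.
move: a b; apply: (@homo_leq _ (fun t => inbox (ls (c t) p)) (fun s1 s2 => {subset s1 <= s2})).
- by move=> s m.
- by move=> s2 s1 s3 sub12 sub23 m /sub12 /sub23.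
- by move=> t; exact: step_inbox (exec.2 t).
Qed.

Lemma flags_persist p a b :
  a <= b -> cview (ls (c b) p) = cview (ls (c a) p) ->
  (cv_sent (ls (c a) p) -> cv_sent (ls (c b) p)) /\
  (su_sent (ls (c a) p) -> su_sent (ls (c b) p)).
Proof.
elim: b => [|b IH]; first by rewrite leqn0 => /eqP->.
rewrite leq_eqVlt => /predU1P[-> //|/[!ltnS] ab] eq_ab.
have eq_b : cview (ls (c b) p) = cview (ls (c a) p).
  have := cview_nondecreasing p ab; have := cview_nondecreasing p (leqnSn b).
  by rewrite /= eq_ab; lia.
have [cv_b su_b] := IH ab eq_b.
have [cv_b' su_b'] := step_flags (exec.2 b) (etrans eq_ab (esym eq_b)).
by split=> [/cv_b/cv_b' | /su_b/su_b'].
Qed.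

Lemma cview_bounded_until_installed v t :
  installed_sys (c t) v -> (forall t', t <= t' -> ~ installed_sys (c t') v.+1) ->
  forall a s, t <= a -> cview (ls (c a) s) <= v.
Proof.
move=> [_ le_v] never; elim=> [|a IH] s; first by rewrite leqn0 => /eqP <-.
rewrite leq_eqVlt => /predU1P[<- //|/[!ltnS] ta].
have le_Sv s' : cview (ls (c a.+1) s') <= v.+1.
  by have /andP[_ ?] := step_cview s' (exec.2 a); have := IH s' ta; lia.
rewrite leqNgt; apply/negP => gt_v; apply: (never a.+1); first lia.
by split=> //; exists s; have := le_Sv s; lia.
Qed.

End Execution.

Section Weights.
Variables (n f : nat) (weight : nat -> 'I_n -> rat).
Hypotheses (n_gt2f : 2 * f + 1 <= n) (wok : weights_ok f weight).
Local Open Scope ring_scope.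

Lemma weight_gt0 v s : 0 < weight v s.
Proof.
have [lt_n _] := (wok v).1 s.
rewrite -(pmulr_rgt0 _ (_ : 0 < 2 * (n - f)%:R)); last by rewrite mulr_gt0 ?ltr0n //; lia.
by apply: le_lt_trans lt_n.
Qed.

Lemma weighted_majorityS v (A B : {set 'I_n}) :
  A \subset B -> weighted_majority weight v A -> weighted_majority weight v B.
Proof.
move=> subAB; rewrite /weighted_majority /wsum => /lt_le_trans; apply.
rewrite [leRHS](big_setID A) /= (setIidPr subAB) lerDl.
by apply: sumr_ge0 => s _; exact/ltW/weight_gt0.
Qed.

Lemma weighted_majority_setC v (F : {set 'I_n}) :
  (#|F| <= f)%N -> weighted_majority weight v (~: F).
Proof.
move=> card_F; rewrite /weighted_majority /wsum.
have card_C : (n - f <= #|~: F|)%N by rewrite cardsCs setCK card_ord; lia.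
have [s Cs] : exists s, s \in ~: F by apply/set0Pn; rewrite -card_gt0; lia.
have nf_gt0 : 0 < (n - f)%:R :> rat by rewrite ltr0n; lia.
rewrite ltr_pdivrMr // -(ltr_pM2l nf_gt0) mulr_suml mulr_sumr.
apply: (le_lt_trans (y := \sum_(s in ~: F) n%:R)).
  by rewrite sumr_const -mulrnA -natrM ler_nat mulnC leq_mul2l card_C orbT.
apply: ltr_sum => [|t _]; first by apply/hasP; exists s; rewrite ?mem_index_enum.
by rewrite (mulrC (weight v t)) mulrA (mulrC _ 2); exact: ((wok v).1 t).1.
Qed.

End Weights.

Section Liveness.
Variables (n f : nat) (weight : nat -> 'I_n -> rat) (d0 : data) (c : nat -> config n).
Variable F : {set 'I_n}.
Hypotheses (n_gt2f : 2 * f + 1 <= n) (wok : weights_ok f weight).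
Hypotheses (exec : execution weight d0 c) (links : reliable_links c) (fair_c : fair weight c).
Hypotheses (card_F : #|F| <= f) (correct_F : forall s, s \notin F -> correct c s).

Lemma not_eventually_install s :
  correct c s -> ~ eventually (fun a => en_install weight (ls (c a) s)).
Proof.
move=> /fair_c fair_s [N HN].
by have [_ _ [a [Na not_en]]] := fair_s N; exact/not_en/HN.
Qed.

Lemma eventually_su_sent p :
  correct c p -> eventually_constant (fun a => cview (ls (c a) p)) ->
  eventually (fun a => su_sent (ls (c a) p)).
Proof.
move=> correct_p [T stable].
have [[t1 [Tt1 no_timeout]] _ _] := fair_c correct_p T.
have cv1 : cv_sent (ls (c t1) p).
  by apply: contra_notT no_timeout => ncv; split.
have [_ [t2 [t12 no_uninstall]] _] := fair_c correct_p t1.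
have [cv12 _] := flags_persist exec t12 (stable t1 Tt1 t2 t12).
have su2 : su_sent (ls (c t2) p).
  by apply: contra_notT no_uninstall => nsu; split => //; left; exact: cv12.
exists t2 => a t2a; apply: (flags_persist exec t2a _).2 su2.
by rewrite (stable t1 Tt1 a) ?(stable t1 Tt1 t2) //; lia.
Qed.

Lemma eventually_su_received s p m t :
  correct c s -> correct c p -> eventually_constant (fun a => cview (ls (c a) p)) ->
  m <= cview (ls (c t) p) -> eventually (fun a => p \in su_senders (ls (c a) s) m).
Proof.
move=> correct_s correct_p const_p le_m.
have [N su_N] := eventually_su_sent correct_p const_p.
have lt_m : m < cview (ls (c (maxn N t)) p) + su_sent (ls (c (maxn N t)) p).
  rewrite su_N ?leq_maxl // addn1 ltnS.
  exact: leq_trans le_m (cview_nondecreasing exec p (leq_maxr N t)).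
have [d [w sent_su]] := execution_state_updates_sent exec s lt_m.
have [t3 recv] := links sent_su correct_s.
exists t3 => a t3a; rewrite inE; apply/hasP; exists (p, SU d m w); last by rewrite /= !eqxx.
exact: (inbox_nondecreasing exec t3a) recv.
Qed.

Lemma views_not_eventually_constant :
  ~ (forall s, eventually_constant (fun a => cview (ls (c a) s))).
Proof.
move=> const; have [T stable] := eventually_forall const.
have [s0 s0F] : exists s0, s0 \notin F.
  have : 0 < #|~: F| by rewrite cardsCs setCK card_ord; lia.
  by case/card_gt0P => s0; rewrite inE; exists s0.
case: (@arg_minnP _ s0 (fun s => s \notin F) (fun s => cview (ls (c T) s)) s0F).
move=> s1 s1F min_s1; set m := cview (ls (c T) s1).
have recv : eventually (fun a => forall p, p \notin F -> p \in su_senders (ls (c a) s1) m).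
  apply: eventually_forall => p; have [pF|pF] := boolP (p \in F).
    by exists 0.
  have [N HN] := eventually_su_received (correct_F s1F) (correct_F pF) (const p) (min_s1 p pF).
  by exists N => a /HN.
have [N HN] := eventually_and recv (eventually_su_sent (correct_F s1F) (const s1)).
apply: (not_eventually_install (correct_F s1F)); exists (maxn N T) => a.
rewrite geq_max => /andP[/HN[recv_a su_a] Ta]; split=> //; first exact: correct_F.
rewrite (stable T (leqnn T) s1 a Ta) -/m.
apply: (weighted_majorityS n_gt2f wok _ (weighted_majority_setC n_gt2f wok m card_F)).
by apply/subsetP => p; rewrite inE; exact: recv_a.
Qed.

End Liveness.

Theorem lemma6 (n f : nat) (weight : nat -> 'I_n -> rat) (d0 : data)
  (c : nat -> config n) (v t : nat) :
  2 * f + 1 <= n ->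
  weights_ok f weight ->
  execution weight d0 c ->
  at_most_f_crash c f ->
  reliable_links c ->
  fair weight c ->
  installed_sys (c t) v ->
  exists t', t <= t' /\ installed_sys (c t') v.+1.
Proof.
move=> n_gt2f wok exec [F [card_F correct_F]] links fair_c inst; apply: NNPP => never.
have bounded : forall a s, t <= a -> cview (ls (c a) s) <= v.
  apply: (cview_bounded_until_installed exec inst) => t' tt' inst'.
  by apply: never; exists t'.
apply: (views_not_eventually_constant n_gt2f wok exec links fair_c card_F correct_F) => s.
apply: (@nondecreasing_bounded_eventually_constant _ v (cview_nondecreasing exec s)) => a.
exact: leq_trans (cview_nondecreasing exec s (leq_maxl a t)) (bounded _ s (leq_maxr a t)).
Qed.
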